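(* There is an absolute constant $C$ such that for all integers $n \ge 3$, $g(n,3) \le C\, n\, (\log_2 n)^{\log_2 7}$.
   Context: For integers $2\le k\le n$, let $S_n$ denote the set of permutations of $[n]=\{1,\dots,n\}$ (written as sequences), and $S_{n,k}$ the set of all sequences of $k$ distinct elements of $[n]$. A sequence $\kappa\in S_{n,k}$ is a subsequence of a permutation $\pi\in S_n$ if its elements appear in $\pi$ in the same relative order as in $\kappa$. A perfect sequence covering array ${\rm PSCA}(n,k)$ with multiplicity $\lambda$ (a positive integer) is a multiset $X$ of elements of $S_n$ such that every $\kappa\in S_{n,k}$ is a subsequence of exactly $\lambda$ elements of $X$ (counted with multiplicity). $g(n,k)$ denotes the smallest $\lambda$ for which a ${\rm PSCA}(n,k)$ with multiplicity $\lambda$ exists. *)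

From mathcomp Require Import all_boot.
From Stdlib Require Import Reals.

Definition is_perm (n : nat) (p : seq nat) : bool := perm_eq p (iota 1 n).

Definition is_kseq (n k : nat) (s : seq nat) : bool :=
  [&& size s == k, uniq s & all (fun x => (1 <= x <= n)%N) s].

(* X (a multiset of permutations, given as a list) is a PSCA(n,k) with
   multiplicity lam: lam positive, every element of X a permutation of [n],
   and every kappa in S_{n,k} is a subsequence of exactly lam members of X
   (counted with multiplicity). *)
Definition is_PSCA (n k : nat) (X : seq (seq nat)) (lam : nat) : Prop :=
  (0 < lam)%N /\ all (is_perm n) X /\
  forall s : seq nat, is_kseq n k s -> count (subseq s) X = lam.

(* g(n,k) <= b  :<=>  some PSCA(n,k) has multiplicity lam <= b
   (g is the least such multiplicity). *)
Definition g_le (n k : nat) (b : R) : Prop :=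
  exists (X : seq (seq nat)) (lam : nat), is_PSCA n k X lam /\ (INR lam <= b)%R.

Definition log2 (x : R) : R := (ln x / ln 2)%R.

(* Work with families of rankings of a finite set in which every ordered
   triple of distinct points appears in increasing order in exactly [lam]
   rankings; read as permutations they form a PSCA(n,3) of multiplicity [lam].
   Such a family on a field [F] of order [q] yields one on the affine plane
   [F * F] of multiplicity [2 (q + 1) lam]: for each of the [q + 1] parallel
   classes of lines and each ranking [s], order the points by their line
   (lines ranked by [s]) and then along the line, once by [s] and once by its
   reverse. Two distinct points share a line in exactly one class, which makes
   the count the same for every triple. Starting from two points and
   getting [2 ^ m] points by squaring [2 ^ ceil(m/2)] points, the ratio of
   multiplicity to number of points grows by at most 6 per step; [t] steps
   reach any [m <= 2 ^ t], and [2 ^ m] just above [n] gives multiplicity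
   [6 ^ t * 2 ^ m = O(n (log2 n) ^ (log2 6))]. *)

From Stdlib Require Import Reals Lra.
From mathcomp Require Import all_boot all_algebra all_field zify ring.

Set Implicit Arguments.
Unset Strict Implicit.
Unset Printing Implicit Defensive.
Import GRing.Theory.

(* The pair condition
   follows from the triple one as soon as [#|T| >= 3], but it must be carried
   along since the construction starts from a two-point set. *)
Definition perfect_rankings (T : finType) (S : seq {ffun T -> nat}) (lam : nat) :=
  [/\ 0 < lam, forall r, r \in S -> injective r,
      forall u v, u != v -> count (fun r : {ffun T -> nat} => r u < r v) S = 3 * lam &
      forall u v w, u != v -> u != w -> v != w ->
        count (fun r : {ffun T -> nat} => r u < r v < r w) S = lam].

Lemma perfect_rankings_comp (T U : finType) (h : U -> T) (S : seq {ffun T -> nat}) lam :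
  injective h -> perfect_rankings S lam ->
  perfect_rankings [seq [ffun u => r (h u)] | r : {ffun T -> nat} <- S] lam.
Proof.
move=> h_inj [lam_gt0 S_inj S2 S3]; split=> //.
- move=> _ /mapP [r rS ->] x y; rewrite !ffunE => /(S_inj r rS); exact: h_inj.
- move=> u v uv; rewrite count_map -(S2 (h u) (h v)) ?(inj_eq h_inj) //.
  by apply: eq_count => r /=; rewrite !ffunE.
- move=> u v w uv uw vw; rewrite count_map -(S3 (h u) (h v) (h w)) ?(inj_eq h_inj) //.
  by apply: eq_count => r /=; rewrite !ffunE.
Qed.

Lemma perfect_rankings_card_le (T U : finType) (S : seq {ffun T -> nat}) lam :
  #|U| <= #|T| -> perfect_rankings S lam ->
  exists S' : seq {ffun U -> nat}, perfect_rankings S' lam.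
Proof.
move=> le_UT S_perf; pose h (u : U) : T := enum_val (widen_ord le_UT (enum_rank u)).
have h_inj : injective h.
  by move=> x y /enum_val_inj /(congr1 val) /= /val_inj; exact: enum_rank_inj.
by eexists; exact: perfect_rankings_comp h_inj S_perf.
Qed.

Lemma perfect_rankings_bool : exists S : seq {ffun bool -> nat}, perfect_rankings S 1.
Proof.
pose r1 : {ffun bool -> nat} := [ffun b : bool => nat_of_bool b].
pose r2 : {ffun bool -> nat} := [ffun b : bool => nat_of_bool (~~ b)].
exists [:: r1; r1; r1; r2; r2; r2]; split=> //.
- have r1_inj : injective r1 by move=> [] []; rewrite !ffunE.
  have r2_inj : injective r2 by move=> [] []; rewrite !ffunE.
  by move=> r; rewrite !inE; do !(case: eqP => [->//|_] /=).
- by move=> [] [] //= _; rewrite !ffunE.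
- by move=> [] [] [].
Qed.

Lemma subseq_sort_in (T : eqType) (leT : rel T) (s t : seq T) :
  {in s &, total leT} -> {in s & &, transitive leT} ->
  {in s &, antisymmetric leT} -> uniq s -> uniq t -> {subset t <= s} ->
  subseq t (sort leT s) = sorted leT t.
Proof.
move=> leT_total leT_tr leT_anti s_uniq t_uniq ts.
have st : {subset [seq x <- s | x \in t] <= s} by move=> x; rewrite mem_filter => /andP [].
have st_t : perm_eq [seq x <- s | x \in t] t.
  apply: uniq_perm; rewrite ?filter_uniq // => x; rewrite mem_filter.
  by apply/andP/idP => [[] // | xt]; split; last exact: ts.
have sort_st : sort leT [seq x <- s | x \in t] = sort leT t.
  apply/perm_sort_inP: st_t.
  - by move=> x y /st xs /st ys; apply: leT_total.
  - by move=> x y z /st xs /st ys /st zs; apply: leT_tr.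
  - by move=> x y /st xs /st ys; apply: leT_anti.
have t_s : all (mem s) t by apply/allP.
have filter_t : [seq x <- sort leT s | x \in t] = sort leT t.
  by rewrite (filter_sort_in leT_total leT_tr) ?sort_st //; apply/allP.
have sort_uniq_s : uniq (sort leT s) by rewrite sort_uniq.
apply/(subseq_uniqP (s1 := t) sort_uniq_s)/idP; rewrite filter_t.
  by move=> ->; apply: sort_sorted_in t_s.
by move=> t_sorted; rewrite (sorted_sort_in leT_tr t_s).
Qed.

Lemma perfect_rankings_PSCA (T : finType) (S : seq {ffun T -> nat}) lam n :
  perfect_rankings S lam -> 0 < n <= #|T| -> exists X, is_PSCA n 3 X lam.
Proof.
case=> lam_gt0 S_inj _ S3 /andP [n_gt0 n_le].
have [x0 _] : exists x0 : T, x0 \in T by apply/card_gt0P; exact: leq_trans n_le.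
pose h i := nth x0 (enum T) (i - 1).
have lt_enum i : i \in iota 1 n -> i - 1 < size (enum T).
  by rewrite mem_iota -cardE => i_n; apply: leq_trans n_le; lia.
have h_inj : {in iota 1 n &, injective h}.
  move=> i j i_n j_n /eqP; rewrite /h nth_uniq ?enum_uniq ?lt_enum // => /eqP.
  by move: i_n j_n; rewrite !mem_iota; lia.
pose perm_of (r : {ffun T -> nat}) := sort (relpre (r \o h) leq) (iota 1 n).
exists (map perm_of S); split=> //; split.
  by apply/allP => _ /mapP [r _ ->]; rewrite /is_perm perm_sort.
have in_iota x : 0 < x <= n -> x \in iota 1 n by rewrite mem_iota; lia.
case=> [|a [|b [|c [|d s]]]] //= /and3P [_ abc_uniq].
move=> /and4P [/in_iota a_n /in_iota b_n /in_iota c_n _].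
move: abc_uniq; rewrite /= !inE !negb_or andbT => /andP [/andP [ab ac] bc].
have h_neq x y : x \in iota 1 n -> y \in iota 1 n -> x != y -> h x != h y.
  by move=> xn yn; apply: contra_neq; apply: h_inj.
rewrite count_map -(S3 (h a) (h b) (h c)) ?h_neq //.
apply: eq_in_count => r /S_inj r_inj /=.
have rh_inj : {in iota 1 n &, injective (r \o h)}.
  by move=> x y xn yn /r_inj; apply: h_inj.
rewrite /perm_of subseq_sort_in ?iota_uniq /= ?andbT ?inE ?negb_or ?ab ?ac ?bc //.
- by rewrite !ltn_neqAle !(inj_eq r_inj) !h_neq.
- by move=> x y _ _; apply: leq_total.
- by move=> x y z _ _ _; apply: leq_trans.
- by move=> x y xn yn /anti_leq /rh_inj; apply.
- by move=> x; rewrite !inE => /or3P [] /eqP ->.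
Qed.

Lemma ltn_swap_inj (T : eqType) (s : T -> nat) x y : injective s -> x != y ->
  (s y < s x) = ~~ (s x < s y).
Proof. by move=> s_inj xy; rewrite ltnNge leq_eqVlt (inj_eq s_inj) (negbTE xy). Qed.

Lemma count_split (T : Type) (p q : pred T) s :
  count (fun x => p x && q x) s + count (fun x => ~~ p x && q x) s = count q s.
Proof. by rewrite -[RHS]size_filter -(count_predC p) !count_filter. Qed.

Section AffinePlane.

Variable F : finFieldType.
Implicit Types (p q : F * F) (d : option F) (s : {ffun F -> nat}).

(* The parallel class [Some c] consists of the lines [y = c x + b], indexed by
   [b]; [None] is the class of vertical lines. [coord d p] locates [p] on its
   line of class [d]. *)
Definition line d p : F := if d is Some c then (p.2 - c * p.1)%R else p.1.
Definition coord d p : F := if d is Some c then p.1 else p.2.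
Definition directions : seq (option F) := None :: map Some (enum F).

Lemma line_coord_inj d p q : line d p = line d q -> coord d p = coord d q -> p = q.
Proof.
case: p q d => [x y] [x' y'] [c|] /= => [E1 E2|-> ->//].
by subst x'; congr pair; move/addIr: E1.
Qed.

Lemma coord_neq d p q : p != q -> line d p = line d q -> coord d p != coord d q.
Proof. by move=> pq line_pq; apply: contra_neq pq; apply: line_coord_inj. Qed.

Lemma count_same_line p q : p != q ->
  count (fun d => line d p == line d q) directions = 1.
Proof.
case: p q => [x y] [x' y'] pq; rewrite /directions /= count_map.
have [x_eq | x_neq] := eqVneq x x'.
  subst x'; have y_neq : y != y' by apply: contraNneq pq => ->.
  rewrite add1n; congr S; apply/eqP; rewrite -leqn0 leqNgt -has_count.
  by apply/hasP => -[c _] /=; rewrite (inj_eq (addIr _)) (negbTE y_neq).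
have x_sub : (x - x' != 0)%R by rewrite subr_eq0.
have line_sub c : (y - c * x - (y' - c * x') = y - y' - c * (x - x'))%R by ring.
rewrite add0n (eq_count (a2 := pred1 ((y - y') / (x - x'))%R)) => [|c /=].
  by rewrite count_uniq_mem ?enum_uniq ?mem_enum.
rewrite -subr_eq0 line_sub subr_eq0.
by apply/eqP/eqP => [-> | ->]; rewrite ?mulfK ?mulfVK.
Qed.

Lemma ltn_lexE B x1 x2 y1 y2 : y1 < B -> y2 < B ->
  (x1 * B + y1 < x2 * B + y2) = (x1 < x2) || (x1 == x2) && (y1 < y2).
Proof.
move=> y1_lt y2_lt; case: (ltngtP x1 x2) => [x_lt | x_gt | ->] /=.
- by apply/idP; nia.
- by apply/negbTE; rewrite -leqNgt; nia.
- by rewrite ltn_add2l.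
Qed.

Lemma ltn_lex_inj B x1 x2 y1 y2 : y1 < B -> y2 < B ->
  x1 * B + y1 = x2 * B + y2 -> x1 = x2 /\ y1 = y2.
Proof. by move=> y1_lt y2_lt E; case: (ltngtP x1 x2) => [x_lt | x_gt | x_eq]; nia. Qed.

Definition rank_max s := \max_(x : F) s x.
Definition orient s (e : bool) : {ffun F -> nat} :=
  if e then [ffun x => rank_max s - s x] else s.

Definition lex_rank d s e : {ffun F * F -> nat} :=
  [ffun p => s (line d p) * (rank_max s).+1 + orient s e (coord d p)].

Lemma orient_lt s e x : orient s e x < (rank_max s).+1.
Proof. by rewrite ltnS; case: e; rewrite /= ?ffunE ?leq_subr ?leq_bigmax. Qed.

Lemma orient_ltE s e x y :
  (orient s e x < orient s e y) = if e then s y < s x else s x < s y.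
Proof. by case: e; rewrite /= ?ffunE ?ltn_sub2lE ?leq_bigmax. Qed.

Lemma orient_inj s e : injective s -> injective (orient s e).
Proof.
move=> s_inj x y; case: e => [|/s_inj //]; rewrite /= !ffunE => /eqP.
by rewrite eqn_sub2lE ?leq_bigmax // => /eqP /s_inj.
Qed.

Lemma lex_rank_ltE d s e p q : injective s ->
  (lex_rank d s e p < lex_rank d s e q) = (s (line d p) < s (line d q)) ||
     (line d p == line d q) && (orient s e (coord d p) < orient s e (coord d q)).
Proof. by move=> s_inj; rewrite !ffunE ltn_lexE ?orient_lt ?(inj_eq s_inj). Qed.

Lemma lex_rank_inj d s e : injective s -> injective (lex_rank d s e).
Proof.
move=> s_inj p q; rewrite !ffunE => /ltn_lex_inj [||/s_inj line_pq /(orient_inj s_inj)];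
  rewrite ?orient_lt //.
exact: line_coord_inj.
Qed.

Definition lex_ranks (S : seq {ffun F -> nat}) d : seq {ffun F * F -> nat} :=
  flatten [seq [:: lex_rank d s false; lex_rank d s true] | s <- S].

Definition square_rankings (S : seq {ffun F -> nat}) : seq {ffun F * F -> nat} :=
  flatten [seq lex_ranks S d | d <- directions].

Lemma count_lex_ranks (P : pred {ffun F * F -> nat}) S d :
  count P (lex_ranks S d) =
  count (fun s => P (lex_rank d s false)) S + count (fun s => P (lex_rank d s true)) S.
Proof. by elim: S => //= s S IH; rewrite IH addnA addnACA. Qed.

Section SquareRankings.

Variables (S : seq {ffun F -> nat}) (lam : nat).
Hypothesis S_perf : perfect_rankings S lam.

Lemma count_lex_ranksE (P : pred {ffun F * F -> nat}) (A B : pred {ffun F -> nat}) d :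
  (forall s, injective s -> P (lex_rank d s false) = A s) ->
  (forall s, injective s -> P (lex_rank d s true) = B s) ->
  count P (lex_ranks S d) = count A S + count B S.
Proof.
case: S_perf => _ S_inj _ _ PA PB; rewrite count_lex_ranks.
by congr (_ + _); apply: eq_in_count => s /S_inj; [apply: PA | apply: PB].
Qed.

Lemma count_lex_ranks2 d u v : u != v ->
  count (fun r : {ffun F * F -> nat} => r u < r v) (lex_ranks S d) = 6 * lam.
Proof.
move=> uv; case: S_perf => _ _ S2 _.
have [line_uv | line_uv] := eqVneq (line d u) (line d v).
  have coord_uv : coord d u != coord d v.
    by apply: contra_neq uv; apply: line_coord_inj.
  rewrite (count_lex_ranksE (A := fun s => s (coord d u) < s (coord d v))
                            (B := fun s => s (coord d v) < s (coord d u)))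
    => [|s s_inj|s s_inj]; rewrite ?lex_rank_ltE ?line_uv ?ltnn ?eqxx ?orient_ltE //.
  by rewrite S2 // S2 1?eq_sym //; lia.
rewrite (count_lex_ranksE (A := fun s => s (line d u) < s (line d v))
                          (B := fun s => s (line d u) < s (line d v)))
  => [|s s_inj|s s_inj]; rewrite ?lex_rank_ltE ?(negbTE line_uv) ?orbF //.
by rewrite S2 //; lia.
Qed.

Lemma count_lex_ranks3_collinear d a b c : a != b -> a != c -> b != c ->
  line d a = line d b -> line d b = line d c ->
  count (fun r : {ffun F * F -> nat} => r a < r b < r c) (lex_ranks S d) = 2 * lam.
Proof.
move=> ab ac bc lab lbc; case: S_perf => _ _ _ S3.
rewrite (count_lex_ranksE
   (A := fun s => s (coord d a) < s (coord d b) < s (coord d c))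
   (B := fun s => s (coord d c) < s (coord d b) < s (coord d a)))
  => [|s s_inj|s s_inj]; rewrite ?lex_rank_ltE // ?lab ?lbc ?eqxx ?ltnn ?orient_ltE 1?andbC //.
have lac : line d a = line d c by rewrite lab.
have [cab cbc cac] := And3 (coord_neq ab lab) (coord_neq bc lbc) (coord_neq ac lac).
by rewrite !S3 ?addnn -?mul2n //; rewrite eq_sym.
Qed.

Lemma count_lex_ranks3_head d a b c : a != b ->
  line d a = line d b -> line d b != line d c ->
  count (fun r : {ffun F * F -> nat} => r a < r b < r c) (lex_ranks S d) = 3 * lam.
Proof.
move=> ab lab lbc; case: S_perf => _ _ S2 _; have cab := coord_neq ab lab.
rewrite (count_lex_ranksE
   (A := fun s => (s (coord d a) < s (coord d b)) && (s (line d b) < s (line d c)))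
   (B := fun s => ~~ (s (coord d a) < s (coord d b)) && (s (line d b) < s (line d c))))
  => [|s s_inj|s s_inj]; rewrite ?lex_rank_ltE // ?lab ?(negbTE lbc) ?eqxx ?ltnn ?orient_ltE ?orbF //.
  by rewrite count_split S2.
by rewrite ltn_swap_inj.
Qed.

Lemma count_lex_ranks3_tail d a b c : b != c ->
  line d a != line d b -> line d b = line d c ->
  count (fun r : {ffun F * F -> nat} => r a < r b < r c) (lex_ranks S d) = 3 * lam.
Proof.
move=> bc lab lbc; case: S_perf => _ _ S2 _; have cbc := coord_neq bc lbc.
rewrite (count_lex_ranksE
   (A := fun s => (s (coord d b) < s (coord d c)) && (s (line d a) < s (line d b)))
   (B := fun s => ~~ (s (coord d b) < s (coord d c)) && (s (line d a) < s (line d b))))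
  => [|s s_inj|s s_inj];
  rewrite ?lex_rank_ltE // -?lbc ?(negbTE lab) ?eqxx ?ltnn ?orient_ltE ?orbF 1?andbC //.
  by rewrite count_split S2.
by rewrite ltn_swap_inj.
Qed.

Lemma count_lex_ranks3_outer d a b c :
  line d a != line d b -> line d b != line d c -> line d a = line d c ->
  count (fun r : {ffun F * F -> nat} => r a < r b < r c) (lex_ranks S d) = 0.
Proof.
move=> lab lbc lac; rewrite (count_lex_ranksE (A := pred0) (B := pred0))
  => [|s s_inj|s s_inj]; rewrite ?count_pred0 ?lex_rank_ltE // ?(negbTE lab) ?(negbTE lbc) ?orbF lac.
  by case: ltngtP.
by case: ltngtP.
Qed.

Lemma count_lex_ranks3_transversal d a b c :
  line d a != line d b -> line d b != line d c -> line d a != line d c ->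
  count (fun r : {ffun F * F -> nat} => r a < r b < r c) (lex_ranks S d) = 2 * lam.
Proof.
move=> lab lbc lac; case: S_perf => _ _ _ S3.
rewrite (count_lex_ranksE
   (A := fun s => s (line d a) < s (line d b) < s (line d c))
   (B := fun s => s (line d a) < s (line d b) < s (line d c)))
  => [|s s_inj|s s_inj]; rewrite ?lex_rank_ltE // ?(negbTE lab) ?(negbTE lbc) ?orbF //.
by rewrite S3 // addnn -mul2n.
Qed.

(* Stated additively so that, summed over all directions, [count_same_line]
   turns the right-hand side into [2 * lam * #|directions| + 2 * lam]. *)
Lemma count_lex_ranks3 d a b c : a != b -> a != c -> b != c ->
  count (fun r : {ffun F * F -> nat} => r a < r b < r c) (lex_ranks S d)
    + 2 * lam * (line d a == line d c)
  = 2 * lam + lam * (line d a == line d b) + lam * (line d b == line d c).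
Proof.
move=> ab ac bc.
have [lab | lab] := eqVneq (line d a) (line d b);
have [lbc | lbc] := eqVneq (line d b) (line d c);
have [lac | lac] := eqVneq (line d a) (line d c).
- by rewrite count_lex_ranks3_collinear //; lia.
- by move: lac; rewrite lab lbc eqxx.
- by move: lbc; rewrite -lab lac eqxx.
- by rewrite count_lex_ranks3_head //; lia.
- by move: lab; rewrite lac -lbc eqxx.
- by rewrite count_lex_ranks3_tail //; lia.
- by rewrite count_lex_ranks3_outer //; lia.
- by rewrite count_lex_ranks3_transversal //; lia.
Qed.

Lemma perfect_rankings_square : perfect_rankings (square_rankings S) (2 * lam * #|F|.+1).
Proof.
have size_dirs : size directions = #|F|.+1 by rewrite /= size_map -cardE.
case: S_perf => lam_gt0 S_inj _ _; split.
- by rewrite !muln_gt0 lam_gt0.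
- move=> r /flatten_mapP [d _ /flatten_mapP [s /S_inj s_inj]].
  by rewrite !inE => /orP [] /eqP ->; apply: lex_rank_inj.
- move=> u v uv; rewrite /square_rankings -size_dirs.
  elim: directions => [|d L IH] /=; first by rewrite !muln0.
  by rewrite count_cat IH count_lex_ranks2 //; nia.
- move=> a b c ab ac bc.
  have sum_dirs L : count (fun r : {ffun F * F -> nat} => r a < r b < r c)
                      (flatten [seq lex_ranks S d | d <- L])
                    + 2 * lam * count (fun d => line d a == line d c) L
                  = 2 * lam * size L + lam * count (fun d => line d a == line d b) L
                    + lam * count (fun d => line d b == line d c) L.
    elim: L => [|d L IH] /=; first by rewrite !muln0.
    by move: (count_lex_ranks3 d ab ac bc); rewrite count_cat; nia.
  move: (sum_dirs directions); rewrite /square_rankings !count_same_line // size_dirs.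
  by rewrite !muln1 -addnA addnn -mul2n => /addIn.
Qed.

End SquareRankings.

End AffinePlane.

Lemma perfect_rankings_square_step m (T : finType) (S : seq {ffun T -> nat}) lam :
  0 < m -> 2 ^ m <= #|T| -> perfect_rankings S lam ->
  exists (T' : finType) (S' : seq {ffun T' -> nat}),
    2 ^ (m + m) <= #|T'| /\ perfect_rankings S' (2 * lam * (2 ^ m).+1).
Proof.
move=> m_gt0 le_T S_perf.
have [F _ card_F] := pPrimePowerField (isT : prime 2) m_gt0.
have [S1 S1_perf] : exists S1 : seq {ffun F -> nat}, perfect_rankings S1 lam.
  by apply: perfect_rankings_card_le S_perf; rewrite card_F.
exists (F * F)%type, (square_rankings S1); split.
  by rewrite card_prod card_F expnD.
by rewrite -card_F; apply: perfect_rankings_square.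
Qed.

Lemma square_step_bound q M lam A :
  2 <= q -> q * q <= 2 * M -> lam <= A * q -> 2 * lam * q.+1 <= 6 * A * M.
Proof.
move=> q_ge2 qq_le lam_le.
have : q * q.+1 <= 3 * M by nia.
have : lam * q.+1 <= A * q * q.+1 by rewrite leq_mul2r lam_le orbT.
nia.
Qed.

Lemma perfect_rankings_exist t m : 0 < m <= 2 ^ t ->
  exists (T : finType) (S : seq {ffun T -> nat}) lam,
    [/\ 2 ^ m <= #|T|, perfect_rankings S lam & lam <= 6 ^ t * 2 ^ m].
Proof.
elim: t m => [|t IH] m m_bd.
  have -> : m = 1 by move: m_bd; rewrite expn0; lia.
  by have [S S_perf] := perfect_rankings_bool; exists bool, S, 1; rewrite card_bool.
have [m_le | m_gt] := leqP m (2 ^ t).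
  have m_bd' : 0 < m <= 2 ^ t by rewrite m_le andbT; case/andP: m_bd.
  have [T [S [lam [card_T S_perf lam_le]]]] := IH m m_bd'.
  exists T, S, lam; split=> //; apply: leq_trans lam_le _.
  by rewrite leq_mul2r expnS leq_pmull ?orbT.
pose m' := m.+1 %/ 2.
have m'_bd : 0 < m' <= 2 ^ t by move: m_bd; rewrite expnS; lia.
have [T [S [lam [card_T S_perf lam_le]]]] := IH m' m'_bd.
have [T' [S' [card_T' S'_perf]]] := perfect_rankings_square_step (proj1 (andP m'_bd)) card_T S_perf.
exists T', S', (2 * lam * (2 ^ m').+1); split=> //.
  by apply: leq_trans card_T'; rewrite leq_exp2l //; lia.
rewrite expnS; apply: square_step_bound lam_le.
  by rewrite -{1}(expn1 2) leq_exp2l //; lia.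
by rewrite -expnD -expnS leq_exp2l //; lia.
Qed.

Lemma PSCA3_bound n : 3 <= n ->
  exists X lam t, [/\ is_PSCA n 3 X lam, lam <= 12 * n * 7 ^ t & 2 ^ 2 ^ t <= n].
Proof.
move=> n_ge3; have /andP [n_gt n_le] := up_log_bounds (isT : 1 < 2) (ltnW n_ge3).
have m_gt1 : 1 < up_log 2 n by apply: leq_trans (leq_up_log 2 n_ge3).
move: n_gt n_le m_gt1; set m := up_log 2 n => n_gt n_le m_gt1.
have /andP [m_gt m_le] := up_log_bounds (isT : 1 < 2) m_gt1.
move: m_gt m_le; set t := up_log 2 m => m_gt m_le.
have t_gt0 : 0 < t by rewrite up_log_gt0.
have [|T [S [lam [card_T S_perf lam_le]]]] := perfect_rankings_exist (t := t) (m := m).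
  by rewrite m_le andbT ltnW.
have [|X X_psca] := perfect_rankings_PSCA S_perf (n := n).
  by rewrite (leq_trans n_le card_T) andbT ltnW // ltnW.
exists X, lam, t.-1; split=> //.
  have six_le_seven : 6 ^ t.-1 <= 7 ^ t.-1 by case: t.-1 => // k; rewrite leq_exp2r.
  have pow6_t : 6 ^ t = 6 * 6 ^ t.-1 by rewrite -expnS prednK.
  have pow2_m : 2 ^ m = 2 * 2 ^ m.-1 by rewrite -expnS prednK // ltnW.
  by move: lam_le; rewrite pow6_t pow2_m; nia.
by apply: leq_trans (ltnW n_gt); rewrite leq_exp2l //; lia.
Qed.

(* The algebra library rebinds the key [%R] to [ring_scope]. *)
Delimit Scope R_scope with R.

Section RealBounds.

Local Open Scope R_scope.

Lemma INR_expn a b : INR (expn a b) = INR a ^ b.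
Proof. by elim: b => [|b IH]; rewrite ?expn0 // expnS mult_INR IH. Qed.

Lemma ln2_gt0 : 0 < ln 2.
Proof. rewrite -ln_1; apply: ln_increasing; lra. Qed.

Lemma log2_ge_of_pow2_le (K : nat) x : 2 ^ K <= x -> INR K <= log2 x.
Proof.
move=> le_x; have pow_gt0 : 0 < 2 ^ K by apply: pow_lt; lra.
have ln_le : ln (2 ^ K) <= ln x.
  by case: (Rle_lt_or_eq_dec _ _ le_x) => [/(ln_increasing _ _ pow_gt0) | ->]; lra.
rewrite ln_pow in ln_le; last lra.
rewrite /log2; apply: (Rmult_le_reg_r (ln 2)); first exact: ln2_gt0.
by rewrite /Rdiv Rmult_assoc Rinv_l; have := ln2_gt0; lra.
Qed.

Lemma pow7_le_Rpower_log2 (k : nat) x : 2 ^ k <= x -> 7 ^ k <= Rpower x (log2 7).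
Proof.
move=> le_x; have ln2_pos := ln2_gt0.
have ln7_pos : 0 < ln 7 by rewrite -ln_1; apply: ln_increasing; lra.
have <- : Rpower (2 ^ k) (log2 7) = 7 ^ k.
  rewrite -(Rpower_pow k 7); last lra.
  rewrite /Rpower /log2 ln_pow; last lra.
  congr exp; rewrite -Rmult_assoc (Rmult_comm (ln 7 / ln 2)) Rmult_assoc.
  by rewrite /Rdiv Rmult_assoc Rinv_l ?Rmult_1_r //; lra.
apply: Rle_Rpower_l; first by apply: Rlt_le; apply: Rdiv_lt_0_compat.
by split=> //; apply: pow_lt; lra.
Qed.

End RealBounds.

Theorem lemma3p3 :
  exists C : R, forall n : nat, (3 <= n)%N ->
    g_le n 3 (C * INR n * Rpower (log2 (INR n)) (log2 7))%R.
Proof.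
exists 12%R => n n_ge3.
have [X [lam [t [X_psca lam_le n_ge]]]] := PSCA3_bound n_ge3.
exists X, lam; split=> //.
have log2_n : (2 ^ t <= log2 (INR n))%R.
  rewrite -[(2 ^ t)%R]/(INR 2 ^ t)%R -INR_expn; apply: log2_ge_of_pow2_le.
  by rewrite -[(2 ^ _)%R]/(INR 2 ^ _)%R -INR_expn; apply/le_INR/leP.
apply: Rle_trans (le_INR _ _ (leP lam_le)) _.
rewrite !mult_INR INR_expn.
have [-> ->] : INR 12 = 12%R /\ INR 7 = 7%R by split; rewrite /=; lra.
by apply: Rmult_le_compat_l; [apply: Rmult_le_pos; [lra | exact: pos_INR] | exact: pow7_le_Rpower_log2].
Qed.
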